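(* Let $\Omega$ be an infinite set and $0\leq k\leq i\leq j$ integers with $k<j$. If $k>0$, then in each of the graphs $\Gamma^\Omega_{i,j;k}$ and $\Gamma^\Omega_{i,j;\geq k}$ each bipart contains a finite set of vertices that have no common neighbour. In the graph $\Gamma^\Omega_{i,j;0}$, every finite set of vertices contained in one bipart has a common neighbour.
   Context: $\Gamma^\Omega_{i,j;k}$ is the bipartite graph with biparts the $i$-subsets and the $j$-subsets of $\Omega$ (two copies if $i=j$), an $i$-subset adjacent to a $j$-subset iff their intersection has exactly $k$ elements; $\Gamma^\Omega_{i,j;\geq k}$ is defined likewise with adjacency iff the intersection has at least $k$ elements. *)

From HB Require Import structures.
From mathcomp Require Import all_boot.
From mathcomp Require Import finmap.
Set Implicit Arguments. Unset Strict Implicit. Unset Printing Implicit Defensive.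
Local Open Scope fset_scope.

(* Omega is modelled by a choiceType T; its finite subsets are {fset T}. *)
Definition infinite_type (T : choiceType) : Prop :=
  forall s : seq T, exists x : T, x \notin s.

(* Vertices of Gamma^Omega_{i,j;P}: pairs (b, A); b = false is the bipart of
   i-subsets, b = true the bipart of j-subsets (two copies if i = j). *)
Definition vertex (T : choiceType) := (bool * {fset T})%type.

Definition is_vertex (T : choiceType) (i j : nat) (v : vertex T) : bool :=
  #|` v.2| == (if v.1 then j else i).

(* Adjacency: vertices in different biparts whose intersection size satisfies P.
   P = (fun n => n == k) gives Gamma_{i,j;k}; P = (fun n => k <= n) gives
   Gamma_{i,j;>=k}. *)
Definition Gamma_adj (T : choiceType) (P : nat -> bool) (v w : vertex T) : bool :=
  (v.1 != w.1) && P #|` v.2 `&` w.2|.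

Definition adj_eq (k : nat) : nat -> bool := fun n => n == k.
Definition adj_ge (k : nat) : nat -> bool := fun n => k <= n.

Definition common_neighbour (T : choiceType) (i j : nat) (P : nat -> bool)
  (S : seq (vertex T)) (w : vertex T) : Prop :=
  is_vertex i j w /\ forall v, v \in S -> Gamma_adj P v w.

Definition in_bipart (T : choiceType) (i j : nat) (b : bool) (S : seq (vertex T)) : Prop :=
  forall v, v \in S -> is_vertex i j v /\ v.1 = b.

From mathcomp Require Import all_boot finmap.
Set Implicit Arguments. Unset Strict Implicit. Unset Printing Implicit Defensive.
Local Open Scope fset_scope.

(* An infinite Omega contains, for any finite X, an n-set avoiding X: this
   gives a common neighbour in Gamma_{i,j;0} and, iterated, arbitrarily long
   families of pairwise disjoint m-sets.  When k > 0, a common neighbour W of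
   such a family meets every member, so |W| is at least the size of the
   family; taking the family larger than the sets of the opposite bipart
   leaves no room for W. *)

Section FiniteSubsets.

Variable T : choiceType.

Lemma exists_fset_disjoint (X : {fset T}) (n : nat) :
  infinite_type T -> exists A : {fset T}, #|` A| = n /\ fdisjoint A X.
Proof.
move=> infT; elim: n => [|n [A [cardA disAX]]].
  by exists fset0; rewrite cardfs0 fdisjoint0X.
have [x] := infT (enum_fset (A `|` X)); rewrite in_fsetU negb_or.
case/andP=> xNA xNX; exists (x |` A).
by rewrite cardfsU1 xNA cardA fdisjointU1X xNX disAX.
Qed.

Lemma exists_pairwise_disjoint_family (m n : nat) :
  infinite_type T ->
  exists L : seq {fset T},
    [/\ size L = n, forall A, A \in L -> #|` A| = m & pairwise fdisjoint L].
Proof.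
move=> infT; elim: n => [|n [L [sizeL cardL disL]]]; first by exists [::].
have [A [cardA disA]] := exists_fset_disjoint (\bigcup_(B <- L) B) m infT.
exists (A :: L); split; first by rewrite /= sizeL.
  by move=> B; rewrite inE => /predU1P[->|/cardL].
rewrite /= disL andbT; apply/allP=> B BL.
exact: fdisjointWr (bigfcup_sup id BL (erefl true)) disA.
Qed.

Lemma size_pairwise_disjoint_le_card (L : seq {fset T}) (B : {fset T}) :
  pairwise fdisjoint L -> (forall A, A \in L -> ~~ fdisjoint A B) ->
  size L <= #|` B|.
Proof.
elim: L B => // A L IHL B /= /andP[/allP disA disL] meetB.
have meetBA : 0 < #|` B `&` A|.
  by rewrite lt0n cardfs_eq0 fsetI_eq0 fdisjoint_sym meetB ?mem_head.
have meetBDA : forall A', A' \in L -> ~~ fdisjoint A' (B `\` A).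
  move=> A' A'L; have := meetB A' (@mem_behead _ (A :: L) _ A'L).
  apply: contraNN => disA'.
  have subB : B `<=` A `|` (B `\` A) by rewrite -fsubDset.
  rewrite (fdisjointWr subB) // fdisjointXU disA' andbT fdisjoint_sym.
  exact: disA.
rewrite -(cardfsID A B) -add1n leq_add //.
exact: IHL.
Qed.

End FiniteSubsets.

Section Graph.

Variables (T : choiceType) (i j : nat).

Lemma no_common_neighbour_of_disjoint_family (P : nat -> bool) (b : bool)
    (L : seq {fset T}) :
  (forall n, P n -> 0 < n) -> pairwise fdisjoint L ->
  (if b then i else j) < size L ->
  ~ exists w, common_neighbour i j P [seq (b, A) | A <- L] w.
Proof.
move=> P_gt0 disL sizeL [[wb W] [/eqP cardW adjW]].
have adjA A : A \in L -> (b != wb) && P #|` A `&` W| by move/(map_f (pair b))/adjW.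
have A0L := mem_nth fset0 (leq_ltn_trans (leq0n _) sizeL).
have wbE : wb = ~~ b by move: (adjA _ A0L) => /andP[]; case: (b); case: (wb).
move: cardW; rewrite /= wbE if_neg => cardW.
suff : size L <= #|` W| by rewrite cardW leqNgt sizeL.
apply: size_pairwise_disjoint_le_card disL _ => A /adjA /andP[_ /P_gt0].
by rewrite lt0n cardfs_eq0 fsetI_eq0.
Qed.

Lemma common_neighbour_adj_eq0 (b : bool) (S : seq (vertex T)) :
  infinite_type T -> in_bipart i j b S ->
  exists w, common_neighbour i j (adj_eq 0) S w.
Proof.
move=> infT inS.
have [W [cardW disW]] :=
  exists_fset_disjoint (\bigcup_(v <- S) v.2) (if b then i else j) infT.
exists (~~ b, W); split; first by rewrite /is_vertex /= if_neg cardW.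
move=> v vS; have [_ vb] := inS v vS.
rewrite /Gamma_adj /adj_eq vb /= cardfs_eq0 fsetI_eq0 fdisjoint_sym.
rewrite (fdisjointWr (bigfcup_sup snd vS (erefl true)) disW) andbT.
by case: (b).
Qed.

End Graph.

Theorem lemma4p4 (T : choiceType) (HT : infinite_type T) (i j k : nat)
  (Hki : k <= i) (Hij : i <= j) (Hkj : k < j) :
  (0 < k ->
     forall P, (P = adj_eq k \/ P = adj_ge k) ->
     forall b : bool, exists S : seq (vertex T),
       in_bipart i j b S /\ ~ (exists w, common_neighbour i j P S w))
  /\
  (forall (b : bool) (S : seq (vertex T)), in_bipart i j b S ->
     exists w, common_neighbour i j (adj_eq 0) S w).
Proof.
split; last by move=> b S; apply: common_neighbour_adj_eq0.
move=> k_gt0 P P_def b.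
have P_gt0 n : P n -> 0 < n.
  by case: P_def => -> /=; [move/eqP->|apply: leq_trans].
have [L [sizeL cardL disL]] :=
  exists_pairwise_disjoint_family (if b then j else i) (if b then i else j).+1 HT.
exists [seq (b, A) | A <- L]; split.
  by move=> _ /mapP[A AL ->]; rewrite /is_vertex /= cardL.
by apply: no_common_neighbour_of_disjoint_family; rewrite // sizeL.
Qed.
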